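(* Let $r\ge0$ and $p=(p_1,\dots,p_k)\in\mathcal{P}_r$, with extended partition $p^\sharp=(p_1,\dots,p_{k'})$ and symbol $\Lambda_p$ as in the context. Say that row $i$ ($1\le i\le k'$) of $p^\sharp$ ends in a square of $\mathcal{HC}(p)$ if $s_{i,p_i}\in\mathcal{HC}(p)$ or $s_{i,p_i+1}\in\mathcal{HC}(p)$ (i.e., the row terminates in a filled square of $\mathcal{HC}(p)$, or is immediately followed by an empty one). Then the assignment $i\mapsto\widetilde p_i$ identifies the set $Z_1(\Lambda_p)$ of single entries of $\Lambda_p$ with the set of rows of $p^\sharp$ ending in a (perhaps empty) square of $\mathcal{HC}(p)$; this gives a bijection $Z_1(\Lambda_p)\leftrightarrow\mathcal{HC}(p)$.
   Context: A partition $p=(p_1\ge\dots\ge p_k>0)$ is identified with its Young diagram $Y_p$ (rows from the top, columns from the left, starting at $1$); $s_{ij}$ is the square in row $i$, column $j$ (possibly outside $Y_p$). Rank: repeatedly removing dominos (two adjacent squares) so that a Young diagram remains ends at the staircase $(r,r-1,\dots,1)$ for a unique $r\ge0$, the rank of $p$; $\mathcal{P}_r$ is the set of partitions of rank $r$. For $p\in\mathcal{P}_r$, $\mathcal{HC}(p)$ is the set of squares $s_{ij}$ with $i+j\equiv r\pmod2$, $i+j>r+1$, such that adding $s_{ij}$ to $Y_p$ or removing it from $Y_p$ yields a Young diagram; such a square is filled if it lies in $Y_p$ and empty otherwise. Symbols: a symbol of defect $d$ is a two-row array with top row a strictly increasing sequence $\lambda_1<\dots<\lambda_{N+d}$ and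 bottom row a strictly increasing sequence $\mu_1<\dots<\mu_N$ of non-negative integers, considered up to the equivalence generated by replacing it with the symbol with top row $0,\lambda_1+1,\dots,\lambda_{N+d}+N+d$ and bottom row $0,\mu_1+1,\dots,\mu_N+N$. For a symbol $\Lambda$, $Z_1(\Lambda)$ is the set of entries appearing in exactly one of its rows and $Z_2(\Lambda)$ the set of entries appearing in both rows. Given $p=(p_1,\dots,p_k)\in\mathcal{P}_r$, form $p^\sharp=(p_1,\dots,p_{k'})$ by appending one part equal to $0$ if $r\equiv k\pmod 2$ (so $k'=k+1$), and otherwise $p^\sharp=p$ ($k'=k$). The numbers $p_i+k'-i$ ($1\le i\le k'$) split into odd ones $2\mu_j+1$ and even ones $2\lambda_j$; the symbol $\Lambda_p$ has top row the $\lambda_j$ and bottom row the $\mu_j$ (it has defect $r+1$). $\widetilde p_i$ denotes the entry of $\Lambda_p$ determined by the part $p_i$ of $p^\sharp$ (i.e. $\widetilde p_i=\lfloor (p_i+k'-i)/2\rfloor$). *)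

From mathcomp Require Import all_boot.
Set Implicit Arguments. Unset Strict Implicit. Unset Printing Implicit Defensive.

Definition is_partition (p : seq nat) : bool :=
  sorted geq p && all (fun x => 0 < x) p.

(* Squares s_ij are pairs (i, j), rows/columns numbered from 1. *)
Definition square := (nat * nat)%type.

Definition Y (p : seq nat) (s : square) : bool :=
  (1 <= s.1 <= size p) && (1 <= s.2 <= nth 0 p s.1.-1).

Definition is_young (S : square -> bool) : Prop :=
  forall i j, S (i, j) ->
    [/\ 1 <= i, 1 <= j, (1 < i -> S (i.-1, j)) & (1 < j -> S (i, j.-1))].

Definition adjacent (a b : square) : bool :=
  ((a.1 == b.1) && (b.2 == a.2.+1)) || ((a.2 == b.2) && (b.1 == a.1.+1)).

Definition domino_step (p q : seq nat) : Prop :=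
  is_partition q /\
  exists a b, [/\ adjacent a b, Y p a, Y p b &
                 forall x, Y q x = [&& Y p x, x != a & x != b]].

Inductive reduces : seq nat -> seq nat -> Prop :=
| reduces_refl p : reduces p p
| reduces_step p q s : domino_step p q -> reduces q s -> reduces p s.

Definition staircase (r : nat) : seq nat := [seq r - i | i <- iota 0 r].

Definition in_P (r : nat) (p : seq nat) : Prop :=
  is_partition p /\ reduces p (staircase r).

Definition addable (p : seq nat) (s : square) : Prop :=
  ~~ Y p s /\ is_young (fun x => Y p x || (x == s)).
Definition removable (p : seq nat) (s : square) : Prop :=
  Y p s /\ is_young (fun x => Y p x && (x != s)).
Definition HC (r : nat) (p : seq nat) (s : square) : Prop :=
  odd (s.1 + s.2) = odd r /\ r.+1 < s.1 + s.2 /\ (addable p s \/ removable p s).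

Definition psharp (r : nat) (p : seq nat) : seq nat :=
  if odd r == odd (size p) then rcons p 0 else p.
Definition kprime (r : nat) (p : seq nat) : nat := size (psharp r p).
Definition part (r : nat) (p : seq nat) (i : nat) : nat := nth 0 (psharp r p) i.-1.

Definition beta (r : nat) (p : seq nat) (i : nat) : nat := part r p i + kprime r p - i.
Definition betas (r : nat) (p : seq nat) : seq nat :=
  [seq beta r p i | i <- iota 1 (kprime r p)].

(* symbol Lambda_p: top row lambda_j (even 2 lambda_j), bottom row mu_j (odd 2 mu_j + 1) *)
Definition sym_top (r : nat) (p : seq nat) : seq nat :=
  [seq b./2 | b <- betas r p & ~~ odd b].
Definition sym_bot (r : nat) (p : seq nat) : seq nat :=
  [seq b./2 | b <- betas r p & odd b].

Definition Z1 (r : nat) (p : seq nat) (z : nat) : bool :=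
  (z \in sym_top r p) != (z \in sym_bot r p).

Definition ptilde (r : nat) (p : seq nat) (i : nat) : nat := (beta r p i)./2.

Definition ends_in_HC (r : nat) (p : seq nat) (i : nat) : Prop :=
  HC r p (i, part r p i) \/ HC r p (i, (part r p i).+1).

From mathcomp Require Import all_boot zify.

(* Record p by its N = k' beta numbers b_x = p_(x+1) + N - (x+1), a strictly
   decreasing sequence.  Removing a domino lowers one beta number by 2 or two
   consecutive ones by 1, so the number of odd beta numbers is unchanged; on the
   staircase it is 0 for N = r + 1, whence 2 * #odd + r + 1 = N for p in P_r.
   The last square of row x+1 is removable iff b_x - 1 is not a beta number,
   the square after it is addable iff b_x + 1 is not, and the parity condition
   of HC(p) is the parity of b_x; counting even beta numbers shows that the
   inequality i + j > r + 1 then holds automatically.  So row x+1 ends in a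
   square of HC(p) iff the partner of b_x in {2z, 2z+1}, z = b_x / 2, is not a
   beta number, i.e. iff z is a single entry of the symbol. *)

(* Rows are indexed from 0 here: [beta_num N p x] is the paper's p_i + N - i for i = x + 1. *)
Definition beta_num (N : nat) (p : seq nat) (x : nat) : nat := nth 0 p x + N - x.+1.
Definition beta_set (N : nat) (p : seq nat) : seq nat := [seq beta_num N p x | x <- iota 0 N].
Definition odd_betas (N : nat) (p : seq nat) : nat := count odd (beta_set N p).

Definition rank_invariant (r : nat) (p : seq nat) : Prop :=
  forall N, size p <= N -> odd N = ~~ odd r -> (odd_betas N p).*2 + r.+1 = N.

Lemma Y_pair p i j : Y p (i, j) = [&& 0 < i, 0 < j & j <= nth 0 p i.-1].
Proof.
rewrite /Y /=; case: i => [|i] //=; case: (ltnP i (size p)) => // i_ge.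
by rewrite nth_default // andbC; case: j.
Qed.

Lemma mem_beta_set N p v : reflect (exists2 x, x < N & v = beta_num N p x) (v \in beta_set N p).
Proof.
apply: (iffP mapP) => [[x]|[x x_lt ->]]; last by exists x; rewrite // mem_iota.
by rewrite mem_iota => /andP[_ x_lt] ->; exists x.
Qed.

Lemma odd_betas_add2 N p : size p <= N -> odd_betas N.+2 p = (odd_betas N p).+1.
Proof.
move=> size_le; rewrite /odd_betas /beta_set -addn2 iotaD map_cat count_cat /=.
rewrite /beta_num !nth_default; try lia.
rewrite (_ : odd _ + (odd _ + 0) = 1); last lia.
rewrite addn1 !count_map; congr _.+1; apply: eq_in_count => x /=.
by rewrite mem_iota => /andP[_ x_lt]; lia.
Qed.

Lemma odd_betas_add_double N p m :
  size p <= N -> odd_betas (N + m.*2) p = odd_betas N p + m.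
Proof.
move=> size_le; elim: m => [|m IH]; first by rewrite double0 !addn0.
by rewrite doubleS !addnS odd_betas_add2 ?IH //; lia.
Qed.

Lemma odd_betas_staircase r : odd_betas r.+1 (staircase r) = 0.
Proof.
apply/eqP; rewrite -leqn0 leqNgt -has_count.
apply/hasP => [[_ /mem_beta_set [x x_lt ->]]].
rewrite /beta_num /staircase; case: (ltnP x r) => x_r.
  by rewrite (nth_map 0) ?size_iota // nth_iota //; lia.
by rewrite nth_default ?size_map ?size_iota //; lia.
Qed.

Lemma rank_invariant_staircase r : rank_invariant r (staircase r).
Proof.
move=> N; rewrite size_map size_iota => r_le odd_N.
rewrite (_ : N = r.+1 + ((N - r.+1)./2).*2); last lia.
rewrite odd_betas_add_double ?size_map ?size_iota // odd_betas_staircase; lia.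
Qed.

Lemma row_length_eq u v : (forall k, 0 < k -> (k <= u) = (k <= v)) -> u = v.
Proof.
move=> H; apply/eqP; rewrite eqn_leq; apply/andP; split.
- by case: u H => [|u] H //; rewrite -H.
- by case: v H => [|v] H //; rewrite H.
Qed.

Lemma row_length_remove u v c m : 0 < c -> 0 < m -> c + m <= v.+1 ->
  (forall k, 0 < k -> (k <= u) = (k <= v) && ~~ (c <= k < c + m)) ->
  v.+1 = c + m /\ u = c.-1.
Proof.
move=> c_gt0 m_gt0 cm_le H.
have v_eq : v.+1 = c + m by have := H c c_gt0; have := H v ltac:(lia); lia.
by split=> //; apply: row_length_eq => k k_gt0; rewrite H //; apply/idP/idP; lia.
Qed.

Lemma size_domino_step p q : domino_step p q -> size q <= size p.
Proof.
move=> [/andP[_ q_pos] [a [b [_ _ _ Yq]]]]; rewrite leqNgt; apply/negP => size_lt.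
have := Yq ((size p).+1, 1); rewrite !Y_pair /= (nth_default 0 (leqnn _)) /=.
by rewrite (all_nthP 0 q_pos).
Qed.

Lemma odd_betas_shorten_row N p q x0 :
  (forall x, x != x0 -> nth 0 q x = nth 0 p x) -> (nth 0 q x0).+2 = nth 0 p x0 ->
  odd_betas N q = odd_betas N p.
Proof.
move=> q_row q_x0; rewrite /odd_betas !count_map; apply: eq_in_count => x.
rewrite mem_iota /beta_num => /andP[_ x_lt] /=.
by case: (eqVneq x x0) x_lt => [-> x0_lt|x_ne _]; [rewrite -q_x0; lia | rewrite q_row].
Qed.

Lemma count_odd_split N x0 (f : nat -> nat) : x0.+1 < N ->
  count odd (map f (iota 0 N)) = count odd (map f (iota 0 x0)) + (odd (f x0) + odd (f x0.+1))
     + count odd (map f (iota x0.+2 (N - x0.+2))).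
Proof.
move=> x0_lt; rewrite {1}(_ : N = x0 + (2 + (N - x0.+2))); last lia.
by rewrite !iotaD !map_cat !count_cat /= add0n addn0 addnA (_ : x0 + 2 = x0.+2) //; lia.
Qed.

Lemma odd_betas_shorten_rows2 N p q x0 : x0.+1 < N ->
  (forall x, x != x0 -> x != x0.+1 -> nth 0 q x = nth 0 p x) ->
  nth 0 p x0.+1 = nth 0 p x0 ->
  (nth 0 q x0).+1 = nth 0 p x0 -> (nth 0 q x0.+1).+1 = nth 0 p x0.+1 ->
  odd_betas N q = odd_betas N p.
Proof.
move=> x0_lt q_row p_eq q_x0 q_x1.
rewrite /odd_betas /beta_set !(count_odd_split _ _ (beta_num N _) x0_lt).
congr (_ + _ + _).
- rewrite !count_map; apply: eq_in_count => x; rewrite mem_iota => /andP[_ x_lt] /=.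
  by rewrite /beta_num q_row //; lia.
- by rewrite /beta_num; lia.
- rewrite !count_map; apply: eq_in_count => x; rewrite mem_iota => /andP[x_ge _] /=.
  by rewrite /beta_num q_row //; lia.
Qed.

Lemma odd_betas_domino_step N p q :
  domino_step p q -> size p <= N -> odd_betas N q = odd_betas N p.
Proof.
move=> [_ [[i j] [[i' j'] [adj Ya Yb Yq]]]] size_le.
have q_rows x k : 0 < k -> (k <= nth 0 q x) =
    [&& k <= nth 0 p x, (x.+1, k) != (i, j) & (x.+1, k) != (i', j')].
  by move=> k_gt0; have := Yq (x.+1, k); rewrite !Y_pair /= k_gt0.
rewrite !Y_pair /= in Ya Yb; move: Ya Yb => /and3P[i_gt0 j_gt0 j_le] /and3P[i'_gt0 j'_gt0 j'_le].
case/orP: adj => /andP[/eqP /= ij_eq /eqP /= ij'_eq]; subst.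
- have [p_row q_row] : (nth 0 p i'.-1).+1 = j + 2 /\ nth 0 q i'.-1 = j.-1.
    by apply: row_length_remove => // [|k k_gt0]; [lia | rewrite q_rows // !xpair_eqE; lia].
  apply: (@odd_betas_shorten_row _ _ _ i'.-1) => [x x_ne|]; last lia.
  by apply: row_length_eq => k k_gt0; rewrite q_rows // !xpair_eqE; lia.
- rewrite /= in j'_le; have i_lt : i < size p.
    by rewrite ltnNge; apply: contraTN j'_le => /(nth_default 0) ->; lia.
  have [p_row0 q_row0] : (nth 0 p i.-1).+1 = j' + 1 /\ nth 0 q i.-1 = j'.-1.
    by apply: row_length_remove => // [|k k_gt0]; [lia | rewrite q_rows // !xpair_eqE; lia].
  have [p_row1 q_row1] : (nth 0 p i).+1 = j' + 1 /\ nth 0 q i = j'.-1.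
    by apply: row_length_remove => // [|k k_gt0]; [lia | rewrite q_rows // !xpair_eqE; lia].
  apply: (@odd_betas_shorten_rows2 _ _ _ i.-1) => [|x x_ne0 x_ne1|||]; rewrite ?prednK //; try lia.
  by apply: row_length_eq => k k_gt0; rewrite q_rows // !xpair_eqE; lia.
Qed.

Lemma rank_invariant_domino_step r p q :
  domino_step p q -> rank_invariant r q -> rank_invariant r p.
Proof.
move=> step q_inv N size_le odd_N; rewrite -(odd_betas_domino_step _ _ _ step size_le).
by apply: q_inv odd_N; exact: leq_trans (size_domino_step _ _ step) size_le.
Qed.

Lemma in_P_rank_invariant r p : in_P r p -> rank_invariant r p.
Proof.
move=> [_ red].
have [s red_s s_eq] : exists2 s, reduces p s & s = staircase r by exists (staircase r).
elim: red_s s_eq {red} => [p' ->|p' q s' step _ IH s_eq]; first exact: rank_invariant_staircase.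
exact: rank_invariant_domino_step step (IH s_eq).
Qed.

Lemma partition_nth_nonincr p x y : is_partition p -> x <= y -> nth 0 p y <= nth 0 p x.
Proof.
move=> /andP[p_sorted _] x_le_y; case: (ltnP y (size p)) => y_lt; last by rewrite nth_default.
apply: (sorted_leq_nth (rev_trans leq_trans) leqnn 0 p_sorted) => //; rewrite inE //.
exact: leq_ltn_trans y_lt.
Qed.

Lemma partition_nth_gt0 p x : is_partition p -> x < size p -> 0 < nth 0 p x.
Proof. by move=> /andP[_ /all_nthP p_pos]; apply: p_pos. Qed.

Lemma young_Y p : is_partition p -> is_young (Y p).
Proof.
move=> p_part i j; rewrite !Y_pair => /and3P[i_gt0 j_gt0 j_le]; split=> // lt1.
- by rewrite j_gt0 /=; have := partition_nth_nonincr p i.-2 i.-1 p_part; lia.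
- lia.
Qed.

Lemma removable_iff p i j : is_partition p ->
  removable p (i, j) <-> [/\ 0 < i, 0 < j, j = nth 0 p i.-1 & nth 0 p i < j].
Proof.
move=> p_part; split=> [[Ys young_minus]|[i_gt0 j_gt0 j_eq p_lt]].
  move: (Ys); rewrite Y_pair => /and3P[i_gt0 j_gt0 j_le]; split=> //.
  - apply/eqP; rewrite eqn_leq j_le leqNgt; apply/negP => j_lt.
    have : Y p (i, j.+1) && ((i, j.+1) != (i, j)) by rewrite Y_pair xpair_eqE /=; lia.
    by move/(young_minus i j.+1) => [_ _ _ /(_ j_gt0)]; rewrite Y_pair xpair_eqE /=; lia.
  - rewrite ltnNge; apply/negP => j_le'.
    have : Y p (i.+1, j) && ((i.+1, j) != (i, j)) by rewrite Y_pair xpair_eqE /=; lia.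
    by move/(young_minus i.+1 j) => [_ _ /(_ i_gt0)]; rewrite Y_pair xpair_eqE /=; lia.
split; first by rewrite Y_pair i_gt0 j_gt0 j_eq leqnn.
move=> a b /andP[Yab ab_ne]; have [a_gt0 b_gt0 Yup Yleft] := young_Y _ p_part _ _ Yab.
move: Yab; rewrite Y_pair => /and3P[_ _ b_le].
split=> // lt1; [rewrite Yup // | rewrite Yleft //]; apply/eqP => -[a_eq b_eq];
  by move: b_le; rewrite a_eq in lt1 *; lia.
Qed.

Lemma addable_iff p i j : is_partition p ->
  addable p (i, j) <-> [/\ 0 < i, j = (nth 0 p i.-1).+1 & (1 < i -> j <= nth 0 p i.-2)].
Proof.
move=> p_part; split=> [[Ys young_plus]|[i_gt0 j_eq j_le_up]].
  have := young_plus i j; rewrite eqxx orbT => /(_ isT) [i_gt0 j_gt0 Yup Yleft].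
  move: Ys; rewrite Y_pair i_gt0 j_gt0 /= -ltnNge => j_gt; split=> //.
  - case: (ltnP 1 j) => j_gt1; last lia.
    move: (Yleft j_gt1); rewrite Y_pair xpair_eqE eqxx /=; lia.
  - move=> i_gt1; move: (Yup i_gt1); rewrite Y_pair xpair_eqE /=; lia.
split; first by rewrite Y_pair i_gt0 j_eq /=; lia.
move=> a b /orP[Yab|/eqP [-> ->]].
  have [a_gt0 b_gt0 Yup Yleft] := young_Y _ p_part _ _ Yab.
  by split=> // lt1; [rewrite Yup | rewrite Yleft].
split=> // [|i_gt1|j_gt1]; first by rewrite j_eq.
- by rewrite Y_pair; have := j_le_up i_gt1; lia.
- by rewrite Y_pair; lia.
Qed.

Lemma beta_num_ltn N p x y :
  is_partition p -> x < y -> y < N -> beta_num N p y < beta_num N p x.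
Proof.
move=> p_part x_lt y_lt; have := partition_nth_nonincr p x y p_part (ltnW x_lt).
by rewrite /beta_num; lia.
Qed.

Lemma count_even_iota k : count (fun v => ~~ odd v) (iota 0 k) = uphalf k.
Proof. by elim: k => [|k IH] //; rewrite -addn1 iotaD count_cat IH /= addn0; lia. Qed.

Lemma count_even_beta_set_le N p x m : is_partition p -> x < N ->
  (forall y, x < y < N -> ~~ odd (beta_num N p y) -> beta_num N p y < m) ->
  count (fun v => ~~ odd v) (beta_set N p) <= x + ~~ odd (beta_num N p x) + uphalf m.
Proof.
move=> p_part x_lt below_m.
rewrite /beta_set [in iota 0 N](_ : N = x + (1 + (N - x.+1))); last lia.
rewrite !iotaD !map_cat !count_cat /= add0n addn0 -addnA leq_add //.
  by rewrite (leq_trans (count_size _ _)) // size_map size_iota.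
rewrite leq_add // -count_even_iota -!size_filter uniq_leq_size //.
  rewrite filter_uniq // map_inj_in_uniq ?iota_uniq // => y z.
  rewrite !mem_iota => y_in z_in b_eq.
  apply/eqP; case: ltngtP => [y_lt|z_lt|//].
  - by have := beta_num_ltn N p y z p_part y_lt; lia.
  - by have := beta_num_ltn N p z y p_part z_lt; lia.
move=> v; rewrite !mem_filter => /andP[v_even /mapP[y]]; rewrite mem_iota => y_in v_eq; subst v.
by rewrite mem_iota v_even /= add0n below_m //; lia.
Qed.

Lemma neq_mem_half_pair (B : seq nat) b : b \in B ->
  (((b./2).*2 \in B) != ((b./2).*2.+1 \in B)) = if odd b then b.-1 \notin B else b.+1 \notin B.
Proof.
move=> b_in; case: ifP => b_odd.
  have -> : (b./2).*2 = b.-1 by lia.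
  by rewrite prednK ?b_in; [case: (_ \in B) | lia].
have -> : (b./2).*2 = b by lia.
by rewrite b_in.
Qed.

Lemma eq_of_half_pair (B : seq nat) b c : b \in B -> c \in B -> b./2 = c./2 ->
  ((b./2).*2 \in B) != ((b./2).*2.+1 \in B) -> b = c.
Proof.
move=> b_in c_in half_eq; apply: contraNeq => b_ne.
have [b_odd|b_even] := boolP (odd b).
- have -> : (b./2).*2.+1 = b by lia.
  have -> : (b./2).*2 = c by lia.
  by rewrite b_in c_in.
- have -> : (b./2).*2.+1 = c by lia.
  have -> : (b./2).*2 = b by lia.
  by rewrite b_in c_in.
Qed.

Lemma count_even_beta_set N p : count (fun v => ~~ odd v) (beta_set N p) + odd_betas N p = N.
Proof. by rewrite addnC /odd_betas count_predC size_map size_iota. Qed.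

Lemma kprime_bounds r p : size p <= kprime r p <= (size p).+1.
Proof. by rewrite /kprime /psharp; case: ifP; rewrite ?size_rcons leqnn ?leqnSn. Qed.

Lemma odd_kprime r p : odd (kprime r p) = ~~ odd r.
Proof.
rewrite /kprime /psharp; case: ifP => [/eqP|/negbT]; rewrite ?size_rcons /=;
  by case: odd; case: odd.
Qed.

Lemma partE r p x : part r p x.+1 = nth 0 p x.
Proof.
rewrite /part /psharp /=; case: ifP => // _; rewrite nth_rcons.
by case: ltngtP => // [x_gt|->]; rewrite nth_default // ltnW.
Qed.

Lemma betasE r p : betas r p = beta_set (kprime r p) p.
Proof.
rewrite /betas /beta_set -[1]/(1 + 0) iotaDl -map_comp; apply: eq_map => x /=.
by rewrite /beta /beta_num add1n partE.
Qed.

Lemma ptildeE r p x : ptilde r p x.+1 = (beta_num (kprime r p) p x)./2.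
Proof. by rewrite /ptilde /beta /beta_num partE. Qed.

Lemma mem_half_even (s : seq nat) z : (z \in [seq b./2 | b <- s & ~~ odd b]) = (z.*2 \in s).
Proof.
apply/mapP/idP => [[b]|z2_in]; last by exists z.*2; rewrite ?mem_filter ?odd_double ?doubleK.
by rewrite mem_filter => /andP[b_even b_in] ->; rewrite (_ : (b./2).*2 = b) //; lia.
Qed.

Lemma mem_half_odd (s : seq nat) z : (z \in [seq b./2 | b <- s & odd b]) = (z.*2.+1 \in s).
Proof.
apply/mapP/idP => [[b]|z2_in]; last by exists z.*2.+1; rewrite ?mem_filter /= ?odd_double //; lia.
by rewrite mem_filter => /andP[b_odd b_in] ->; rewrite (_ : (b./2).*2.+1 = b) //; lia.
Qed.

Lemma Z1E r p z :
  Z1 r p z = ((z.*2 \in beta_set (kprime r p) p) != (z.*2.+1 \in beta_set (kprime r p) p)).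
Proof. by rewrite /Z1 /sym_top /sym_bot mem_half_even mem_half_odd betasE. Qed.

Section RowEnds.

Variables (r N : nat) (p : seq nat).
Hypothesis p_part : is_partition p.
Hypothesis size_le_N : size p <= N.
Hypothesis N_le_size : N <= (size p).+1.
Hypothesis odd_N : odd N = ~~ odd r.
Hypothesis rank_count : (odd_betas N p).*2 + r.+1 = N.

Local Notation b := (beta_num N p).
Local Notation B := (beta_set N p).

Lemma HC_filled_row_end x : x < N ->
  HC r p (x.+1, nth 0 p x) <-> odd (b x) /\ (b x).-1 \notin B.
Proof.
move=> x_lt; have b_x : b x + x.+1 = nth 0 p x + N by rewrite /beta_num; lia.
split=> [[/= par [_ [/(addable_iff _ _ _ p_part)|/(removable_iff _ _ _ p_part)]]]
        |[b_odd b_pred]].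
- by move=> [_ /=]; lia.
- move=> [_ p_pos _ p_lt]; have b_odd : odd (b x) by lia.
  split=> //; apply/negP => /mem_beta_set [y y_lt b_y].
  case: (leqP y x) => [y_le|x_lt_y].
  + by have := partition_nth_nonincr p y x p_part y_le; move: b_y; rewrite /beta_num; lia.
  + have := partition_nth_nonincr p x.+1 y p_part x_lt_y.
    by move: b_y p_lt; rewrite /beta_num /=; lia.
have p_pos : 0 < nth 0 p x.
  case: (ltnP x (size p)) => [|x_ge]; first exact: partition_nth_gt0.
  by rewrite nth_default // in b_x; lia.
have b_next y : x < y < N -> b y < (b x).-1.
  move=> /andP[x_lt_y y_lt]; have := beta_num_ltn N p x y p_part x_lt_y y_lt.
  suff : b y != (b x).-1 by lia.
  by apply: contraNneq b_pred => <-; apply/mem_beta_set; exists y.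
have p_lt : nth 0 p x.+1 < nth 0 p x.
  case: (ltnP x.+1 N) => [x1_lt|x1_ge]; last by rewrite nth_default //; lia.
  by have := b_next x.+1 ltac:(lia); rewrite /beta_num; lia.
(* Few even beta numbers lie below b x, which forces r + 1 < (x + 1) + p_(x+1). *)
have := count_even_beta_set_le N p x (b x).-1 p_part x_lt (fun y y_in _ => b_next y y_in).
have := count_even_beta_set N p; rewrite b_odd /=.
by split=> /=; [lia | split; [lia | right; apply/removable_iff]].
Qed.

Lemma HC_empty_row_end x : x < N ->
  HC r p (x.+1, (nth 0 p x).+1) <-> ~~ odd (b x) /\ (b x).+1 \notin B.
Proof.
move=> x_lt; have b_x : b x + x.+1 = nth 0 p x + N by rewrite /beta_num; lia.
split=> [[/= par [_ [/(addable_iff _ _ _ p_part)|/(removable_iff _ _ _ p_part)]]]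
        |[b_even b_succ]].
- move=> [_ _ p_le_up]; have b_even : ~~ odd (b x) by lia.
  split=> //; apply/negP => /mem_beta_set [y y_lt b_y].
  case: (leqP x y) => [x_le|y_lt_x].
  + by have := partition_nth_nonincr p x y p_part x_le; move: b_y; rewrite /beta_num; lia.
  + have := p_le_up ltac:(lia); have := partition_nth_nonincr p y x.-1 p_part ltac:(lia).
    by move: b_y; rewrite /beta_num /=; lia.
- by move=> [_ _ /=]; lia.
have b_next y : x < y < N -> b y < b x.
  by move=> /andP[x_lt_y y_lt]; apply: beta_num_ltn.
have := count_even_beta_set_le N p x (b x) p_part x_lt (fun y y_in _ => b_next y y_in).
have := count_even_beta_set N p; rewrite b_even /=.
split=> /=; [lia | split; [lia | left; apply/addable_iff => //]].
split=> // x_gt0; have : b x.-1 != (b x).+1.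
  by apply: contraNneq b_succ => <-; apply/mem_beta_set; exists x.-1 => //; lia.
by have := partition_nth_nonincr p x.-1 x p_part (leq_pred x); rewrite /beta_num /=; lia.
Qed.

End RowEnds.

Lemma HC_row_end r p s : is_partition p -> HC r p s ->
  0 < s.1 <= kprime r p /\ (s.2 = part r p s.1 \/ s.2 = (part r p s.1).+1).
Proof.
move=> p_part; have [size_le _] := andP (kprime_bounds r p); have odd_N := odd_kprime r p.
case: s => i j [/= par [_ [/(addable_iff _ _ _ p_part)|/(removable_iff _ _ _ p_part)]]].
- case: i par => [|x] par [//= _ j_eq up_ge]; rewrite partE; split; last by right.
  have x_le : x <= size p.
    rewrite leqNgt; apply/negP => x_gt; have := up_ge ltac:(lia).
    by rewrite /= j_eq !nth_default //; lia.
  move: par; rewrite j_eq; case: (ltnP x (size p)) => [|x_ge]; first lia.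
  by rewrite nth_default //; lia.
- case: i par => [|x] par [//= _ _ j_eq p_lt]; rewrite partE; split; last by left.
  by case: (ltnP x (size p)) => [|x_ge]; [lia | move: j_eq; rewrite nth_default //; lia].
Qed.

Lemma Z1_ptilde_iff r p i : in_P r p -> 0 < i <= kprime r p ->
  Z1 r p (ptilde r p i) <-> ends_in_HC r p i.
Proof.
move=> P_p; case: i => [|x] //= x_lt; have [size_le N_le] := andP (kprime_bounds r p).
have b_in : beta_num (kprime r p) p x \in beta_set (kprime r p) p by apply/mem_beta_set; exists x.
have rank_count := in_P_rank_invariant r p P_p _ size_le (odd_kprime r p).
rewrite /ends_in_HC partE ptildeE Z1E neq_mem_half_pair //.
rewrite (HC_filled_row_end _ _ _ P_p.1 size_le N_le (odd_kprime r p) rank_count _ x_lt).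
rewrite (HC_empty_row_end _ _ _ P_p.1 size_le N_le (odd_kprime r p) rank_count _ x_lt).
by case: odd; split=> [|[[]|[]]] //; [left | right].
Qed.

Lemma ptilde_inj r p i j : is_partition p -> 0 < i <= kprime r p -> 0 < j <= kprime r p ->
  Z1 r p (ptilde r p i) -> ptilde r p i = ptilde r p j -> i = j.
Proof.
move=> p_part; case: i j => [|x] [|y] //= x_lt y_lt; rewrite !ptildeE Z1E => single half_eq.
have [x_in y_in] : beta_num (kprime r p) p x \in beta_set (kprime r p) p /\
    beta_num (kprime r p) p y \in beta_set (kprime r p) p.
  by split; apply/mem_beta_set; [exists x | exists y].
have b_eq := eq_of_half_pair _ _ _ x_in y_in half_eq single.
congr _.+1; apply/eqP; case: ltngtP => [x_lt_y|y_lt_x|//].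
- by have := beta_num_ltn _ _ _ _ p_part x_lt_y y_lt; lia.
- by have := beta_num_ltn _ _ _ _ p_part y_lt_x x_lt; lia.
Qed.

Lemma Z1_ptilde_surj r p z : Z1 r p z -> exists2 i, 0 < i <= kprime r p & ptilde r p i = z.
Proof.
rewrite Z1E => single.
have [v v_in v_half] : exists2 v, v \in beta_set (kprime r p) p & v./2 = z.
  case: (boolP (z.*2 \in _)) single => [z2_in _|_ /negPn z21_in].
    by exists z.*2; rewrite ?doubleK.
  by exists z.*2.+1 => //; lia.
by move: v_in v_half => /mem_beta_set [x x_lt ->] <-; exists x.+1; rewrite ?ptildeE.
Qed.

Theorem mainTheorem3 (r : nat) (p : seq nat) :
  in_P r p ->
  (forall i, 1 <= i <= kprime r p -> (Z1 r p (ptilde r p i) <-> ends_in_HC r p i)) /\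
  (forall i j, 1 <= i <= kprime r p -> 1 <= j <= kprime r p ->
     ends_in_HC r p i -> ends_in_HC r p j -> ptilde r p i = ptilde r p j -> i = j) /\
  (forall z, Z1 r p z ->
     exists i, [/\ 1 <= i <= kprime r p, ends_in_HC r p i & ptilde r p i = z]) /\
  (forall s, HC r p s ->
     1 <= s.1 <= kprime r p /\ (s.2 = part r p s.1 \/ s.2 = (part r p s.1).+1)).
Proof.
move=> P_p; split; first by move=> i; exact: Z1_ptilde_iff.
split.
  move=> i j i_in j_in /(Z1_ptilde_iff _ _ _ P_p i_in) single _.
  exact: ptilde_inj P_p.1 i_in j_in single.
split.
  move=> z /[dup] /Z1_ptilde_surj [i i_in <-] single.
  by exists i; split=> //; apply/(Z1_ptilde_iff _ _ _ P_p i_in).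
by move=> s; apply: HC_row_end P_p.1.
Qed.
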